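(* Let $\mu$ be a positive finite Borel measure on $[0,1)$. The following are equivalent: (i) the operators $H_\mu:A(\mathbb{T})\to A(\mathbb{T})$ and $C_\mu:A(\mathbb{T})\to A(\mathbb{T})$ are well defined; (ii) the operators $H_\mu:A(\mathbb{T})\to A(\mathbb{T})$ and $C_\mu:A(\mathbb{T})\to A(\mathbb{T})$ are nuclear; (iii) $\sum_{n=0}^\infty\mu_n<\infty$.
   Context: $A(\mathbb{T})$ is the Wiener algebra, identified with $\ell^1_A=\{f(z)=\sum_{n\ge0}a_nz^n: \|f\|_1=\sum_n|a_n|<\infty\}$, i.e. with the sequence space $\ell^1$ of Taylor coefficients. $\mu_n=\int_0^1t^n\,d\mu(t)$. On coefficient sequences, $H_\mu((a_n)_{n\ge0})=\left(\sum_{n=0}^\infty\mu_{n+k}a_n\right)_{k\ge0}$ and $C_\mu((a_n)_{n\ge0})=\left(\mu_k\sum_{n=0}^k a_n\right)_{k\ge0}$ (Cesàro-type operator). An operator $T:X\to Y$ between Banach spaces is nuclear if there exist $(x_n^* )\subseteq X^*$, $(y_n)\subseteq Y$ with $\sum_n\|x_n^*\|\|y_n\|<\infty$ and $T=\sum_n x_n^*(\cdot)y_n$. *)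

From HB Require Import structures.
From mathcomp Require Import all_boot all_order all_algebra.
From mathcomp Require Import all_classical all_reals all_analysis.
Set Implicit Arguments. Unset Strict Implicit. Unset Printing Implicit Defensive.
Import Order.TTheory GRing.Theory Num.Theory.
Import numFieldNormedType.Exports.
Local Open Scope classical_set_scope.
Local Open Scope ring_scope.

Section Defs.
Variable R : realType.

(* The Wiener algebra A(T), identified with l^1 on its Taylor coefficients. *)
Definition in_l1 (a : nat -> R) : Prop := cvg (series (fun k => `|a k|) @ \oo).
Definition l1norm (a : nat -> R) : R := limn (series (fun k => `|a k|)).

Definition moment (mu : {measure set R -> \bar R}) (n : nat) : R :=
  fine (\int[mu]_(t in `[0%R, 1%R[) (t ^+ n)%:E)%E.

Definition Hmu (mu : {measure set R -> \bar R}) (a : nat -> R) : nat -> R :=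
  fun k => limn (series (fun n => moment mu (n + k) * a n)).

Definition Hmu_series_cvg (mu : {measure set R -> \bar R}) (a : nat -> R) : Prop :=
  forall k, cvg (series (fun n => moment mu (n + k) * a n) @ \oo).

Definition Cmu (mu : {measure set R -> \bar R}) (a : nat -> R) : nat -> R :=
  fun k => moment mu k * \sum_(0 <= n < k.+1) a n.

Definition maps_l1 (T : (nat -> R) -> (nat -> R)) : Prop :=
  forall a, in_l1 a -> in_l1 (T a).

Definition bounded_functional_l1 (x : (nat -> R) -> R) (c : R) : Prop :=
  [/\ forall a b, in_l1 a -> in_l1 b -> x (fun k => a k + b k) = x a + x b,
      forall r a, in_l1 a -> x (fun k => r * a k) = r * x a,
      0 <= c &
      forall a, in_l1 a -> `|x a| <= c * l1norm a].

Definition nuclear_l1 (T : (nat -> R) -> (nat -> R)) : Prop :=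
  maps_l1 T /\
  exists (x : nat -> (nat -> R) -> R) (c : nat -> R) (y : nat -> nat -> R),
    [/\ forall j, bounded_functional_l1 (x j) (c j),
        forall j, in_l1 (y j),
        cvg (series (fun j => c j * l1norm (y j)) @ \oo) &
        forall a, in_l1 a ->
          (fun N => l1norm (fun k => T a k - \sum_(0 <= j < N) x j a * y j k))
            @ \oo --> 0].

End Defs.

From HB Require Import structures.
From mathcomp Require Import all_boot all_order all_algebra.
From mathcomp Require Import all_classical all_reals all_analysis.
From mathcomp Require Import measurable_realfun.
Import Order.TTheory GRing.Theory Num.Theory.
Import numFieldNormedType.Exports.
Local Open Scope classical_set_scope.
Local Open Scope ring_scope.

(* On [0, 1) the moments mu_n are nonnegative and nonincreasing in n, so both
   |(H_mu a)_k| and |(C_mu a)_k| are at most mu_k ||a||_1.  If sum_k mu_k < oo,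
   an operator on l^1 with such coordinate bounds c_k ||a||_1, c summable, is
   nuclear: it is the sum of the rank-one maps a |-> (T a)_k e_k, of nuclear
   norm at most c_k, and the partial sums converge because truncations of an
   l^1 sequence converge to it in l^1.  Conversely C_mu e_0 = (mu_k)_k, so
   C_mu alone mapping l^1 into l^1 forces sum_k mu_k < oo. *)

Set Implicit Arguments.
Unset Strict Implicit.
Unset Printing Implicit Defensive.

Section moments.
Variables (R : realType) (mu : {measure set R -> \bar R}).
Hypothesis mu_fin : (mu setT < +oo)%E.

Local Notation I01 := (`[0%R, 1%R[%classic : set R).

Let mexpr n : measurable_fun I01 (EFin \o (fun t : R => t ^+ n)).
Proof. by apply/measurable_EFinP; exact: measurable_funX. Qed.

Let I01_bounds (t : R) : I01 t -> 0 <= t /\ t < 1.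
Proof. by rewrite /= in_itv /= => /andP. Qed.

Let integral_expr_ge0 n : (0 <= \int[mu]_(t in I01) (t ^+ n)%:E)%E.
Proof.
apply: integral_ge0 => t /I01_bounds[t0 _].
by rewrite lee_fin exprn_ge0.
Qed.

Let le_integral_expr m n : (m <= n)%N ->
  (\int[mu]_(t in I01) (t ^+ n)%:E <= \int[mu]_(t in I01) (t ^+ m)%:E)%E.
Proof.
move=> mn; apply: ge0_le_integral => //; [|exact: mexpr|exact: mexpr|].
- by move=> t /I01_bounds[t0 _]; rewrite lee_fin exprn_ge0.
- by move=> t /I01_bounds[t0 t1]; rewrite lee_fin ler_wiXn2l // ltW.
Qed.

Let integral_expr_fin n : (\int[mu]_(t in I01) (t ^+ n)%:E)%E \is a fin_num.
Proof.
rewrite ge0_fin_numE //; apply: le_lt_trans (le_integral_expr (leq0n n)) _.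
under eq_integral do rewrite expr0.
rewrite integral_cst // mul1e; apply: le_lt_trans mu_fin.
by apply: le_measure; rewrite ?inE.
Qed.

Lemma moment_ge0 n : 0 <= moment mu n.
Proof. exact/fine_ge0/integral_expr_ge0. Qed.

Lemma moment_le m n : (m <= n)%N -> moment mu n <= moment mu m.
Proof. by move=> mn; apply: fine_le => //; exact: le_integral_expr. Qed.

End moments.

Section l1.
Variable R : realType.
Implicit Types (a c : nat -> R) (L : R).

Lemma series_le_limn c : (forall k, 0 <= c k) -> cvgn (series c) ->
  forall N, series c N <= limn (series c).
Proof.
move=> c0 cc; apply: nondecreasing_cvgn_le => //.
exact: nondecreasing_series.
Qed.

Lemma sum_le_l1norm a : in_l1 a -> forall N, \sum_(0 <= k < N) `|a k| <= l1norm a.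
Proof. exact: series_le_limn. Qed.

Lemma l1norm_ge0 a : in_l1 a -> 0 <= l1norm a.
Proof. by move=> /sum_le_l1norm/(_ 0%N); rewrite big_geq. Qed.

Lemma in_l1_sum_bound a L : (forall N, \sum_(0 <= k < N) `|a k| <= L) -> in_l1 a.
Proof.
move=> aL; apply: nondecreasing_is_cvgn; first exact: nondecreasing_series.
by exists L => _ [N _ <-]; exact: aL.
Qed.

Lemma l1norm_le a L : (forall N, \sum_(0 <= k < N) `|a k| <= L) -> l1norm a <= L.
Proof.
move=> aL; apply: limr_le; first exact: in_l1_sum_bound aL.
exact: nearW.
Qed.

Lemma in_l1_dominated a c L : (forall k, 0 <= c k) -> cvgn (series c) ->
  0 <= L -> (forall k, `|a k| <= c k * L) -> in_l1 a.
Proof.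
move=> c0 cc L0 ac; apply: (@series_le_cvg _ _ (L *: c)) => //.
- by move=> k; rewrite fctE mulr_ge0.
- by move=> k; rewrite fctE [_ *: _]mulrC.
- exact: (@is_cvg_seriesZ _ c L cc).
Qed.

Definition unit_seq j : nat -> R := fun k => (k == j)%:R.

Lemma sum_unit_seq (F : nat -> R) j N :
  \sum_(0 <= k < N) (k == j)%:R * F k = (j < N)%:R * F j.
Proof.
under eq_bigr do rewrite mulr_natl mulrb.
by rewrite -big_mkcond big_nat1_eq /= mulr_natl mulrb.
Qed.

Lemma unit_seq_in_l1 j : in_l1 (unit_seq j).
Proof.
apply: (@in_l1_sum_bound _ 1) => N.
under eq_bigr do rewrite normr_nat -(mulr1 (_ == _)%:R).
by rewrite sum_unit_seq mulr1; case: (j < N)%N.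
Qed.

Lemma l1norm_unit_seq j : l1norm (unit_seq j) = 1.
Proof.
apply: cvg_lim => //; apply: cvg_near_cst; near=> N.
rewrite seriesEnat /=.
under eq_bigr do rewrite normr_nat -(mulr1 (_ == _)%:R).
rewrite sum_unit_seq mulr1.
suff -> : (j < N)%N by [].
by near: N; exact: nbhs_infty_gt.
Unshelve. all: by end_near. Qed.

Definition truncate N a : nat -> R := fun k => (k < N)%:R * a k.

Lemma sum_truncate_err_le a N M :
  \sum_(0 <= k < M) `|a k - truncate N a k| <= \sum_(N <= k < M + N) `|a k|.
Proof.
have errE k : `|a k - truncate N a k| = (N <= k)%:R * `|a k|.
  by rewrite /truncate; case: leqP => _; rewrite ?mul0r ?subr0 ?mul1r ?subrr ?normr0.
under eq_bigr do rewrite errE.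
apply: le_trans (_ : \sum_(0 <= k < M + N) (N <= k)%:R * `|a k| <= _).
  rewrite (big_cat_nat _ (leq_addr N M)) //= lerDl.
  by apply: sumr_ge0 => k _; rewrite mulr_ge0.
rewrite (big_cat_nat (leq0n N) (leq_addl M N)) /=.
rewrite big_nat_cond big1 ?add0r => [|k /andP[/andP[_ kN] _]]; last first.
  by rewrite leqNgt kN mul0r.
by apply: ler_sum_nat => k /andP[Nk _]; rewrite Nk mul1r.
Qed.

Lemma truncate_cvg a : in_l1 a ->
  (fun N => l1norm (fun k => a k - truncate N a k)) @ \oo --> 0.
Proof.
move=> a1.
have sum_err_le N M : \sum_(0 <= k < M) `|a k - truncate N a k| <=
    l1norm a - series (fun k => `|a k|) N.
  apply: le_trans (sum_truncate_err_le a N M) _.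
  by rewrite -sub_series_geq ?leq_addl // lerD2r sum_le_l1norm.
apply: (@squeeze_cvgr _ _ _ _ (fun=> 0) (fun N => l1norm a - series (fun k => `|a k|) N)).
- apply: nearW => N; rewrite l1norm_le ?andbT //.
  exact/l1norm_ge0/in_l1_sum_bound.
- exact: cvg_cst.
- by rewrite -(subrr (l1norm a)); apply: cvgB => //; exact: cvg_cst.
Qed.

End l1.

Section coordinate_bound.
Variables (R : realType) (T : (nat -> R) -> (nat -> R)) (c : nat -> R).
Hypotheses (c_ge0 : forall k, 0 <= c k) (c_summable : cvgn (series c)).
Hypothesis T_coord_le : forall k a, in_l1 a -> `|T a k| <= c k * l1norm a.

Lemma maps_l1_coord_le : maps_l1 T.
Proof.
move=> a a1; apply: in_l1_dominated c_ge0 c_summable (l1norm_ge0 a1) _.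
by move=> k; exact: T_coord_le.
Qed.

Hypothesis T_coordD : forall k a b, in_l1 a -> in_l1 b ->
  T (fun n => a n + b n) k = T a k + T b k.
Hypothesis T_coordZ : forall k r a, in_l1 a -> T (fun n => r * a n) k = r * T a k.

Lemma nuclear_l1_coord_le : nuclear_l1 T.
Proof.
split; first exact: maps_l1_coord_le.
exists (fun k a => T a k), c, (@unit_seq R); split.
- by move=> k; split; [exact: T_coordD|exact: T_coordZ|exact: c_ge0|exact: T_coord_le].
- exact: unit_seq_in_l1.
- by under eq_fun do rewrite l1norm_unit_seq mulr1.
- move=> a a1; apply: cvg_trans (truncate_cvg (maps_l1_coord_le a1)).
  apply: near_eq_cvg; apply: nearW => N; congr l1norm; apply/funext => k.
  rewrite /truncate -sum_unit_seq.
  by under eq_bigr do rewrite /unit_seq eq_sym mulrC.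
Qed.

End coordinate_bound.

Section moment_operators.
Variables (R : realType) (mu : {measure set R -> \bar R}).
Hypothesis mu_fin : (mu setT < +oo)%E.
Local Notation m := (moment mu).

Let m_ge0 := moment_ge0 mu.

Lemma sum_Hmu_terms_le a k N :
  \sum_(0 <= n < N) `|m (n + k) * a n| <= m k * \sum_(0 <= n < N) `|a n|.
Proof.
rewrite mulr_sumr; apply: ler_sum => n _.
rewrite normrM ger0_norm // ler_wpM2r //.
exact/moment_le/leq_addl.
Qed.

Lemma Hmu_terms_in_l1 a k : in_l1 a -> in_l1 (fun n => m (n + k) * a n).
Proof.
move=> a1; apply: (@in_l1_sum_bound _ _ (m k * l1norm a)) => N.
by apply: le_trans (sum_Hmu_terms_le a k N) _; rewrite ler_wpM2l ?sum_le_l1norm.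
Qed.

Lemma Hmu_series_cvg_l1 a : in_l1 a -> Hmu_series_cvg mu a.
Proof. by move=> a1 k; apply/normed_cvg/Hmu_terms_in_l1. Qed.

Lemma Hmu_coord_le k a : in_l1 a -> `|Hmu mu a k| <= m k * l1norm a.
Proof.
move=> a1; apply: le_trans (lim_series_norm (@Hmu_terms_in_l1 a k a1)) _.
apply: l1norm_le => N.
by apply: le_trans (sum_Hmu_terms_le a k N) _; rewrite ler_wpM2l ?sum_le_l1norm.
Qed.

Lemma Hmu_coordD k a b : in_l1 a -> in_l1 b ->
  Hmu mu (fun n => a n + b n) k = Hmu mu a k + Hmu mu b k.
Proof.
move=> a1 b1; rewrite /Hmu -lim_seriesD; last 2 first.
- exact: Hmu_series_cvg_l1 a1 k.
- exact: Hmu_series_cvg_l1 b1 k.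
by congr (limn (series _)); apply/funext => n; rewrite fctE mulrDr.
Qed.

Lemma Hmu_coordZ k r a : in_l1 a -> Hmu mu (fun n => r * a n) k = r * Hmu mu a k.
Proof.
move=> a1; rewrite /Hmu -[RHS]lim_seriesZ; last exact: Hmu_series_cvg_l1 a1 k.
by congr (limn (series _)); apply/funext => n; rewrite fctE mulrCA.
Qed.

Lemma Cmu_coord_le k a : in_l1 a -> `|Cmu mu a k| <= m k * l1norm a.
Proof.
move=> a1; rewrite /Cmu normrM ger0_norm // ler_wpM2l //.
exact: le_trans (ler_norm_sum _ _ _) (sum_le_l1norm a1 _).
Qed.

Lemma Cmu_coordD k a b : Cmu mu (fun n => a n + b n) k = Cmu mu a k + Cmu mu b k.
Proof. by rewrite /Cmu big_split mulrDr. Qed.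

Lemma Cmu_coordZ k r a : Cmu mu (fun n => r * a n) k = r * Cmu mu a k.
Proof. by rewrite /Cmu -mulr_sumr mulrCA. Qed.

Lemma Cmu_unit_seq0 : Cmu mu (@unit_seq R 0) = m.
Proof.
apply/funext => k; rewrite /Cmu /unit_seq.
by rewrite big_nat_recl // big1 => [|n _]; rewrite ?eqxx ?addr0 ?mulr1.
Qed.

Lemma moment_summable_of_maps_l1 : maps_l1 (Cmu mu) -> cvgn (series m).
Proof.
move=> /(_ _ (@unit_seq_in_l1 R 0)); rewrite /in_l1 Cmu_unit_seq0.
by under eq_fun do rewrite ger0_norm //.
Qed.

End moment_operators.

Unset Implicit Arguments.

Theorem theorem31 (R : realType) (mu : {measure set R -> \bar R})
  (mu_fin : (mu setT < +oo)%E)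
  (mu_supp : mu (~` `[0%R, 1%R[) = 0%E) :
  [<-> (* (i) *)
       (forall a, in_l1 a -> Hmu_series_cvg mu a) /\
       maps_l1 (Hmu mu) /\ maps_l1 (Cmu mu);
       (* (ii) *)
       ((forall a, in_l1 a -> Hmu_series_cvg mu a) /\ nuclear_l1 (Hmu mu)) /\
       nuclear_l1 (Cmu mu);
       (* (iii) *)
       cvg (series (moment mu) @ \oo)].
Proof.
have Hmu_cvg := Hmu_series_cvg_l1 mu_fin.
have nuclear_of_summable : cvgn (series (moment mu)) ->
    nuclear_l1 (Hmu mu) /\ nuclear_l1 (Cmu mu).
  move=> msum; split; apply: (nuclear_l1_coord_le (moment_ge0 mu) msum).
  - exact: Hmu_coord_le.
  - exact: Hmu_coordD.
  - exact: Hmu_coordZ.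
  - exact: Cmu_coord_le.
  - by move=> k a b _ _; exact: Cmu_coordD.
  - by move=> k r a _; exact: Cmu_coordZ.
tfae.
- by move=> [_ [_ /moment_summable_of_maps_l1/nuclear_of_summable[nH nC]]].
- by move=> [_ [C_l1 _]]; exact: moment_summable_of_maps_l1.
- by move=> /nuclear_of_summable[[H_l1 _] [C_l1 _]].
Qed.
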